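(* Let $0<\omega_-<\omega_+$ and set $\boldsymbol\omega=(\omega_-,\omega_+)$. (i) If $\omega_+\neq 3\omega_-$, then for every $(\boldsymbol\alpha,\boldsymbol\beta)\in\mathbb N^2\times\mathbb N^2$ with $|\boldsymbol\alpha+\boldsymbol\beta|=4$ and $\boldsymbol\alpha\neq\boldsymbol\beta$, $$|\boldsymbol\omega\cdot(\boldsymbol\alpha-\boldsymbol\beta)|\geq \gamma:=\min\{\omega_-,\ \omega_+-\omega_-,\ |3\omega_--\omega_+|\}>0.$$ (ii) If $\omega_+=3\omega_-$, then for every $(\boldsymbol\alpha,\boldsymbol\beta)\in\mathbb N^2\times\mathbb N^2$ with $|\boldsymbol\alpha+\boldsymbol\beta|=4$, $\boldsymbol\alpha\neq\boldsymbol\beta$ and $(\boldsymbol\alpha,\boldsymbol\beta)\notin\{((3,0),(0,1)),\ ((0,1),(3,0))\}$, $$|\boldsymbol\omega\cdot(\boldsymbol\alpha-\boldsymbol\beta)|\geq \gamma_{\rm res}:=\min\{\omega_-,\ \omega_+-\omega_-\}>0.$$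
   Context: For $\boldsymbol\alpha=(\alpha_1,\alpha_2),\boldsymbol\beta=(\beta_1,\beta_2)\in\mathbb N^2$ (with $\mathbb N$ including $0$), $|\boldsymbol\alpha+\boldsymbol\beta|:=\alpha_1+\alpha_2+\beta_1+\beta_2$, and $\boldsymbol\omega\cdot(\boldsymbol\alpha-\boldsymbol\beta)=\omega_-(\alpha_1-\beta_1)+\omega_+(\alpha_2-\beta_2)$. *)

From Stdlib Require Import Reals.
Open Scope R_scope.

(* multi-indices in N^2 are pairs of nat *)
Definition mlen (a : nat * nat) : nat := (fst a + snd a)%nat.

Definition wdot (wm wp : R) (a b : nat * nat) : R :=
  wm * (INR (fst a) - INR (fst b)) + wp * (INR (snd a) - INR (snd b)).

From Stdlib Require Import Reals Lra Lia ZArith.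
Open Scope R_scope.

(* Write [w . (a - b) = w- s + (w+ - w-) q] with [s = |a| - |b|] and
   [q = a2 - b2].  When [s] and [q] do not have strictly opposite signs, the
   two terms cannot cancel and the modulus is at least [w-] or [w+ - w-].
   Since [|a + b| = 4], [s] is even and [|s - q| + |q| = |a - b|_1 <= 4], so
   opposite signs force [(s, q) = +-(2, -1)]: this is exactly the pair
   [((3,0),(0,1))] or its swap, where [w . (a - b) = +-(3 w- - w+)]. *)

Lemma Rmin_le_Rabs_same_sign_comb (u v : R) (s q : Z) :
  0 < u -> 0 < v -> (s <> 0 \/ q <> 0)%Z -> (0 <= s * q)%Z ->
  Rmin u v <= Rabs (u * IZR s + v * IZR q).
Proof.
  intros Hu Hv Hnz Hsq.
  pose proof (Rmin_l u v) as Hmin_u; pose proof (Rmin_r u v) as Hmin_v.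
  assert (Hsign : (0 <= s /\ 0 <= q)%Z \/ (s <= 0 /\ q <= 0)%Z) by nia.
  destruct Hsign as [[Hs Hq] | [Hs Hq]].
  - assert (Hpos : (1 <= s)%Z \/ (1 <= q)%Z) by lia.
    apply IZR_le in Hs, Hq.
    rewrite Rabs_pos_eq by nra.
    destruct Hpos as [H1 | H1]; apply IZR_le in H1; nra.
  - assert (Hneg : (s <= -1)%Z \/ (q <= -1)%Z) by lia.
    apply IZR_le in Hs, Hq.
    rewrite Rabs_left1 by nra.
    destruct Hneg as [H1 | H1]; apply IZR_le in H1; nra.
Qed.

Lemma even_opposite_signs_l1_le4 (s q : Z) :
  Z.Even s -> (Z.abs (s - q) + Z.abs q <= 4)%Z -> (s * q < 0)%Z ->
  (s = 2 /\ q = -1)%Z \/ (s = -2 /\ q = 1)%Z.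
Proof.
  intros [k ->] Hl1 Hsq.
  assert (Hsign : (0 < k /\ q < 0)%Z \/ (k < 0 /\ 0 < q)%Z) by nia.
  lia.
Qed.

Lemma wdot_split (wm wp : R) (a b : nat * nat) :
  wdot wm wp a b =
  wm * IZR (Z.of_nat (mlen a) - Z.of_nat (mlen b))
  + (wp - wm) * IZR (Z.of_nat (snd a) - Z.of_nat (snd b)).
Proof.
  destruct a as [a1 a2], b as [b1 b2]; unfold wdot, mlen; simpl.
  rewrite !minus_IZR, !Nat2Z.inj_add, !plus_IZR, <- !INR_IZR_INZ.
  ring.
Qed.

Lemma wdot_ge_Rmin_or_resonant (wm wp : R) (a b : nat * nat) :
  0 < wm -> wm < wp -> (mlen a + mlen b)%nat = 4%nat -> a <> b ->
  Rmin wm (wp - wm) <= Rabs (wdot wm wp a b)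
  \/ (a, b) = ((3%nat, 0%nat), (0%nat, 1%nat))
  \/ (a, b) = ((0%nat, 1%nat), (3%nat, 0%nat)).
Proof.
  intros Hm Hmp Hlen Hab.
  rewrite wdot_split.
  destruct a as [a1 a2], b as [b1 b2]; unfold mlen in *; simpl in *.
  set (s := (Z.of_nat (a1 + a2) - Z.of_nat (b1 + b2))%Z).
  set (q := (Z.of_nat a2 - Z.of_nat b2)%Z).
  destruct (Z_lt_le_dec (s * q) 0) as [Hopp | Hsame].
  - right.
    assert (Hs_even : Z.Even s) by (exists (2 - Z.of_nat (b1 + b2))%Z; unfold s; lia).
    assert (Hl1 : (Z.abs (s - q) + Z.abs q <= 4)%Z) by (unfold s, q; lia).
    destruct (even_opposite_signs_l1_le4 s q Hs_even Hl1 Hopp) as [[Hs Hq] | [Hs Hq]];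
      unfold s, q in Hs, Hq; [left | right].
    + assert (a1 = 3 /\ a2 = 0 /\ b1 = 0 /\ b2 = 1)%nat as (-> & -> & -> & ->) by lia.
      reflexivity.
    + assert (a1 = 0 /\ a2 = 1 /\ b1 = 3 /\ b2 = 0)%nat as (-> & -> & -> & ->) by lia.
      reflexivity.
  - left.
    apply Rmin_le_Rabs_same_sign_comb; [lra | lra | | exact Hsame].
    destruct (Z.eq_dec s 0) as [Hs | Hs]; [right | left; exact Hs].
    intro Hq; apply Hab; unfold s, q in *; f_equal; lia.
Qed.

Lemma wdot_antisym (wm wp : R) (a b : nat * nat) :
  wdot wm wp b a = - wdot wm wp a b.
Proof. unfold wdot; ring. Qed.

Lemma wdot_resonant_pair (wm wp : R) :
  wdot wm wp (3%nat, 0%nat) (0%nat, 1%nat) = 3 * wm - wp.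
Proof. unfold wdot; simpl; ring. Qed.

Theorem proposition4p1 (wm wp : R) (Hm : 0 < wm) (Hmp : wm < wp) :
  (wp <> 3 * wm ->
     0 < Rmin wm (Rmin (wp - wm) (Rabs (3 * wm - wp))) /\
     forall a b : nat * nat,
       (mlen a + mlen b)%nat = 4%nat -> a <> b ->
       Rmin wm (Rmin (wp - wm) (Rabs (3 * wm - wp))) <= Rabs (wdot wm wp a b)) /\
  (wp = 3 * wm ->
     0 < Rmin wm (wp - wm) /\
     forall a b : nat * nat,
       (mlen a + mlen b)%nat = 4%nat -> a <> b ->
       (a, b) <> ((3%nat, 0%nat), (0%nat, 1%nat)) ->
       (a, b) <> ((0%nat, 1%nat), (3%nat, 0%nat)) ->
       Rmin wm (wp - wm) <= Rabs (wdot wm wp a b)).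
Proof.
  split.
  - intros Hnres.
    assert (Hres_pos : 0 < Rabs (3 * wm - wp)) by (apply Rabs_pos_lt; lra).
    split; [repeat apply Rmin_glb_lt; lra |].
    intros a b Hlen Hab.
    assert (Hmin_res : Rmin wm (Rmin (wp - wm) (Rabs (3 * wm - wp)))
                       <= Rabs (3 * wm - wp))
      by (eapply Rle_trans; apply Rmin_r).
    destruct (wdot_ge_Rmin_or_resonant wm wp a b Hm Hmp Hlen Hab)
      as [Hge | [Hres | Hres]].
    + eapply Rle_trans; [| exact Hge].
      apply Rle_min_compat_l, Rmin_l.
    + injection Hres as -> ->; rewrite wdot_resonant_pair; exact Hmin_res.
    + injection Hres as -> ->.
      rewrite wdot_antisym, Rabs_Ropp, wdot_resonant_pair; exact Hmin_res.
  - intros Hres_eq.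
    split; [apply Rmin_glb_lt; lra |].
    intros a b Hlen Hab Hnres1 Hnres2.
    destruct (wdot_ge_Rmin_or_resonant wm wp a b Hm Hmp Hlen Hab)
      as [Hge | [Hres | Hres]]; [exact Hge | contradiction | contradiction].
Qed.
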